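(* Let $\mathbb{A}$ be an epistemic Heyting algebra and let $i$ be an agent. Then $\lozenge_i\mathbb{A}:=\{\lozenge_i a\mid a\in\mathbb{A}\}$ is a Boolean subalgebra of (the Heyting algebra reduct of) $\mathbb{A}$. Furthermore, setting $\Box_i\mathbb{A}:=\{\Box_i a\mid a\in\mathbb{A}\}$, we have $\lozenge_i\mathbb{A}=\Box_i\mathbb{A}$.
   Context: Fix a set $\mathsf{Ag}$ of agents. A monadic Heyting algebra is a Heyting algebra $\mathbb{L}$ together with, for each $i\in\mathsf{Ag}$, monotone unary operations $\lozenge_i,\Box_i$ on $\mathbb{L}$ such that for all $a,b$: $a\leq\lozenge_i a$; $\Box_i a\leq a$; $\lozenge_i(a\vee b)\leq\lozenge_i a\vee\lozenge_i b$; $\Box_i(a\to b)\leq\Box_i a\to\Box_i b$; $\lozenge_i a\leq\Box_i\lozenge_i a$; $\lozenge_i\Box_i a\leq\Box_i a$; $\Box_i(a\to b)\leq\lozenge_i a\to\lozenge_i b$; $\lozenge_i\bot\leq\bot$; $\top\leq\Box_i\top$. An epistemic Heyting algebra is a finite monadic Heyting algebra such that $\lozenge_i a\vee\neg\lozenge_i a=\top$ for every $i\in\mathsf{Ag}$ and every $a$ (where $\neg x:=x\to\bot$). *)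

From HB Require Import structures.
From mathcomp Require Import all_boot all_order.
Set Implicit Arguments. Unset Strict Implicit. Unset Printing Implicit Defensive.
Import Order.TTheory.
Local Open Scope order_scope.

Definition heyting_imp d (T : tbLatticeType d) (imp : T -> T -> T) : Prop :=
  forall a b c : T, (c <= imp a b) = (c `&` a <= b).

Definition hneg d (T : tbLatticeType d) (imp : T -> T -> T) (x : T) : T :=
  imp x \bot.

Definition monadic_heyting d (T : tbLatticeType d) (imp : T -> T -> T)
  (Ag : Type) (dia box : Ag -> T -> T) : Prop :=
  heyting_imp imp /\
  forall i : Ag,
  (forall a b : T, a <= b -> dia i a <= dia i b) /\
      (forall a b : T, a <= b -> box i a <= box i b) /\
      (forall a : T, a <= dia i a) /\
      (forall a : T, box i a <= a) /\
      (forall a b : T, dia i (a `|` b) <= dia i a `|` dia i b) /\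
      (forall a b : T, box i (imp a b) <= imp (box i a) (box i b)) /\
      (forall a : T, dia i a <= box i (dia i a)) /\
      (forall a : T, dia i (box i a) <= box i a) /\
      (forall a b : T, box i (imp a b) <= imp (dia i a) (dia i b)) /\
      dia i \bot <= \bot /\
      \top <= box i \top.

(* Epistemic Heyting algebra: a finite monadic Heyting algebra with
   dia i a \/ ~ dia i a = top. Finiteness is carried by T : finTBLatticeType. *)
Definition epistemic_heyting d (T : finTBLatticeType d) (imp : T -> T -> T)
  (Ag : Type) (dia box : Ag -> T -> T) : Prop :=
  monadic_heyting imp dia box /\
  forall (i : Ag) (a : T), dia i a `|` hneg imp (dia i a) = \top.

Definition boolean_subalgebra d (T : tbLatticeType d) (imp : T -> T -> T)
  (S : T -> Prop) : Prop :=
  S \bot /\ S \top /\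
      (forall x y, S x -> S y -> S (x `&` y)) /\
      (forall x y, S x -> S y -> S (x `|` y)) /\
      (forall x y, S x -> S y -> S (imp x y)) /\
      (forall x, S x -> x `|` hneg imp x = \top).

From mathcomp Require Import all_boot all_order.
Local Open Scope order_scope.
Import Order.TTheory.

(* Both [dia i A] and [box i A] are the set of fixed points of [dia i].  These
   contain bot and top and are closed under meet (dia is inflationary and
   monotone) and join (dia preserves joins).  For implication, a fixed point
   x also satisfies [box i x = x], so the axiom [box (c -> c /\ x) <= dia c ->
   dia (c /\ x)] yields [dia c /\ x <= dia (c /\ x)]; taking [c := x -> y]
   gives [dia (x -> y) /\ x <= dia y = y]. *)

Section FixedPointsOfDia.

Variables (disp : Order.disp_t) (T : tbLatticeType disp).
Variables (imp : T -> T -> T) (dia box : T -> T).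

Hypothesis impP : heyting_imp imp.
Hypothesis dia_homo : {homo dia : a b / a <= b}.
Hypothesis box_homo : {homo box : a b / a <= b}.
Hypothesis le_dia : forall a, a <= dia a.
Hypothesis box_le : forall a, box a <= a.
Hypothesis diaU : forall a b, dia (a `|` b) <= dia a `|` dia b.
Hypothesis dia_le_box_dia : forall a, dia a <= box (dia a).
Hypothesis dia_box_le : forall a, dia (box a) <= box a.
Hypothesis box_imp_le_imp_dia : forall a b, box (imp a b) <= imp (dia a) (dia b).
Hypothesis dia0_le : dia \bot <= \bot.
Hypothesis dia_em : forall a, dia a `|` hneg imp (dia a) = \top.

Lemma dia_fixed_of_le x : dia x <= x -> dia x = x.
Proof. by move=> le_dx; apply/le_anti; rewrite le_dx le_dia. Qed.

Lemma box_dia a : box (dia a) = dia a.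
Proof. by apply/le_anti; rewrite box_le dia_le_box_dia. Qed.

Lemma dia_box a : dia (box a) = box a.
Proof. exact/dia_fixed_of_le/dia_box_le. Qed.

Lemma dia_idem a : dia (dia a) = dia a.
Proof. by rewrite -[X in dia X]box_dia dia_box box_dia. Qed.

Lemma box_fixed x : dia x = x -> box x = x.
Proof. by move=> <-; rewrite box_dia. Qed.

Lemma dia_rangeP x : (exists a, x = dia a) <-> dia x = x.
Proof. by split=> [[a ->]|<-]; [rewrite dia_idem | exists x]. Qed.

Lemma box_rangeP x : (exists a, x = box a) <-> dia x = x.
Proof.
split=> [[a ->]|dx]; first exact: dia_box.
by exists x; rewrite box_fixed.
Qed.

Lemma dia_range_box_range x : (exists a, x = dia a) <-> (exists a, x = box a).
Proof. by split=> [/dia_rangeP /box_rangeP | /box_rangeP /dia_rangeP]. Qed.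

Lemma dia_meet_fixed x c : dia x = x -> dia c `&` x <= dia (c `&` x).
Proof.
move=> dx; rewrite meetC -impP -{1}(box_fixed _ dx).
apply: le_trans (box_imp_le_imp_dia _ _); apply: box_homo.
by rewrite impP meetC.
Qed.

Lemma dia_fixed0 : dia \bot = \bot.
Proof. exact: dia_fixed_of_le. Qed.

Lemma dia_fixed1 : dia \top = \top.
Proof. exact/dia_fixed_of_le/lex1. Qed.

Lemma dia_fixedI x y : dia x = x -> dia y = y -> dia (x `&` y) = x `&` y.
Proof.
move=> dx dy; apply: dia_fixed_of_le; rewrite lexI; apply/andP; split.
- by rewrite -[X in _ <= X]dx dia_homo ?leIl.
- by rewrite -[X in _ <= X]dy dia_homo ?leIr.
Qed.

Lemma dia_fixedU x y : dia x = x -> dia y = y -> dia (x `|` y) = x `|` y.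
Proof.
by move=> dx dy; apply/dia_fixed_of_le/(le_trans (diaU x y)); rewrite dx dy.
Qed.

Lemma dia_fixed_imp x y : dia x = x -> dia y = y -> dia (imp x y) = imp x y.
Proof.
move=> dx dy; apply: dia_fixed_of_le; rewrite impP.
apply: le_trans (dia_meet_fixed _ _ dx) _; rewrite -[X in _ <= X]dy dia_homo //.
by rewrite -impP.
Qed.

Lemma boolean_subalgebra_dia_range :
  boolean_subalgebra imp (fun x => exists a, x = dia a).
Proof.
split; first exact/dia_rangeP/dia_fixed0.
split; first exact/dia_rangeP/dia_fixed1.
split; first by move=> x y /dia_rangeP dx /dia_rangeP dy; apply/dia_rangeP/dia_fixedI.
split; first by move=> x y /dia_rangeP dx /dia_rangeP dy; apply/dia_rangeP/dia_fixedU.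
split; first by move=> x y /dia_rangeP dx /dia_rangeP dy; apply/dia_rangeP/dia_fixed_imp.
by move=> x [a ->]; apply: dia_em.
Qed.

End FixedPointsOfDia.

Theorem fact1 (d : Order.disp_t) (T : finTBLatticeType d) (imp : T -> T -> T)
  (Ag : Type) (dia box : Ag -> T -> T)
  (HA : epistemic_heyting imp dia box) (i : Ag) :
  boolean_subalgebra imp (fun x => exists a : T, x = dia i a) /\
  (forall x : T, (exists a : T, x = dia i a) <-> (exists a : T, x = box i a)).
Proof.
have [[impP /(_ i) axioms_i] /(_ i) em_i] := HA.
have [dia_homo [box_homo [le_dia [box_le [diaU [_ [dia_le_box_dia
  [dia_box_le [box_imp_le_imp_dia [dia0_le _]]]]]]]]]] := axioms_i.
split; first exact: (boolean_subalgebra_dia_range _ _ _ _ (box i)).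
exact: dia_range_box_range.
Qed.
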